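(* Assume all agents share a common sense of direction. Then the leader election problem can be solved in $O(\log^2 N)$ rounds in the basic model with $n$ even, and in $\log N$ rounds in the other settings (the basic model with $n$ odd, the lazy model, and the perceptive model).
   Context: Model: $n>4$ agents are at distinct, arbitrary initial positions on a circle of circumference $1$ and act in synchronised unit-time rounds. At the start of a round each agent chooses a direction and moves at unit speed. Agents never pass: two moving agents that collide instantly reverse direction, and a moving agent hitting an idle one becomes idle while the idle one starts moving in the former's direction. There is no communication. At the end of each round an agent learns the clockwise distance from its start-of-round to its end-of-round position. The three models differ as follows: - Basic: direction in $\{\text{right},\text{left}\}$. - Lazy: direction in $\{\text{idle},\text{right},\text{left}\}$. - Perceptive: as basic, plus the agent learns the distance from its start position to its first collision in the round. Agents have distinct IDs in $\{1,\dots,N\}$, $N\ge n$ known, and know the parity of $n$. Leader election is solved when exactly one agent has status ''leader'' and all others ''non-leader''. *)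

From HB Require Import structures.
From mathcomp Require Import all_boot all_order all_algebra.
From mathcomp Require Import reals.
Set Implicit Arguments.
Unset Strict Implicit.
Unset Printing Implicit Defensive.
Import Order.TTheory GRing.Theory Num.Theory.
Local Open Scope ring_scope.

(* Circle of circumference 1 represented by [0,1) in a real type R.
   With a common sense of direction, "right" = clockwise = increasing
   coordinate (mod 1) for every agent. *)
Definition frac1 (R : realType) (x : R) : R := x - (Num.floor x)%:~R.

Definition cwd (R : realType) (x y : R) : R := frac1 (y - x).

Inductive model := Basic | Lazy | Perceptive.
Inductive dir := Idle | Right | Left.

Definition allowed (m : model) (d : dir) : bool :=
  match m, d with
  | Lazy, _ => true
  | _, Idle => false
  | _, _ => true
  end.

Definition is_right (d : dir) : bool := if d is Right then true else false.
Definition is_left (d : dir) : bool := if d is Left then true else false.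

(* The collision dynamics (moving agents that collide
   reverse; a moving agent hitting an idle one stops and the idle one moves
   on) is modelled through its exact "baton passing" description: the set of
   occupied positions after a unit-time round is the initial one, cyclic order
   is preserved, and every agent is rotated by (#right - #left) positions
   clockwise along the cyclic order. *)
Section Round.
Variables (R : realType) (n : nat) (p : 'I_n -> R) (d : 'I_n -> dir).

Definition shift : int :=
  (#|[set k | is_right (d k)]|%:Z - #|[set k | is_left (d k)]|%:Z)%R.

Definition cw_rank (k m : 'I_n) : nat :=
  #|[set m' | cwd (p k) (p m') < cwd (p k) (p m)]|.
Definition ccw_rank (k m : 'I_n) : nat :=
  #|[set m' | cwd (p m') (p k) < cwd (p m) (p k)]|.

Definition new_pos (k : 'I_n) : R :=
  if [pick m | cw_rank k m == `|modz shift n|%N] is Some m then p m else p k.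

Definition displacement (k : 'I_n) : R := cwd (p k) (new_pos k).

(* distance travelled from the start position to the first collision
   (None if the agent does not collide during the round) *)
Definition first_collision (k : 'I_n) : option R :=
  match d k with
  | Right =>
    if [pick m | is_left (d m) &&
          [forall m', is_left (d m') ==> (cw_rank k m <= cw_rank k m')%N]]
    is Some m then Some (cwd (p k) (p m) / 2) else None
  | Left =>
    if [pick m | is_right (d m) &&
          [forall m', is_right (d m') ==> (ccw_rank k m <= ccw_rank k m')%N]]
    is Some m then Some (cwd (p m) (p k) / 2) else None
  | Idle => None
  end.

Definition observation (mo : model) (k : 'I_n) : R * option R :=
  (displacement k, if mo is Perceptive then first_collision k else None).

End Round.

(* A deterministic algorithm: the agent's choice in each round and its final
   status depend only on its ID and its history of observations (N and the
   parity of n are fixed beforehand, see [solves]). *)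
Record algorithm (R : realType) := Algo {
  rounds : nat;
  choose : nat -> seq (R * option R) -> dir;
  decide : nat -> seq (R * option R) -> bool (* true = leader *)
}.

Definition valid (R : realType) (mo : model) (alg : algorithm R) : Prop :=
  forall i h, allowed mo (choose alg i h).

Fixpoint run (R : realType) (mo : model) (alg : algorithm R) (n : nat)
  (ids : 'I_n -> nat) (p0 : 'I_n -> R) (t : nat)
  : ('I_n -> R) * ('I_n -> seq (R * option R)) :=
  match t with
  | 0 => (p0, fun _ => [::])
  | t'.+1 =>
    let: (p, h) := run mo alg ids p0 t' in
    let d := fun k => choose alg (ids k) (h k) in
    (new_pos p d, fun k => rcons (h k) (observation p d mo k))
  end.

Definition leader_elected (R : realType) (alg : algorithm R) (n : nat)
  (ids : 'I_n -> nat) (h : 'I_n -> seq (R * option R)) : Prop :=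
  exists k : 'I_n, forall j : 'I_n, decide alg (ids j) (h j) = (j == k).

Definition solves (R : realType) (mo : model) (N : nat) (par : bool)
  (alg : algorithm R) : Prop :=
  forall n : nat, (4 < n)%N -> (n <= N)%N -> odd n = par ->
  forall ids : 'I_n -> nat, injective ids -> (forall k, 0 < ids k <= N)%N ->
  forall p : 'I_n -> R, (forall k, 0 <= p k < 1) -> injective p ->
  leader_elected alg ids (run mo alg ids p (rounds alg)).2.

From Pilot Require Import Defs.
From mathcomp Require Import all_boot all_order all_algebra.
From mathcomp Require Import reals.
From mathcomp Require Import zify ring lra.

Set Implicit Arguments.
Unset Strict Implicit.
Unset Printing Implicit Defensive.
Import Order.TTheory GRing.Theory Num.Theory.

(* With a common sense of direction, what an agent observes in a round depends
   only on the number [a] of agents moving right: the configuration is rotated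
   by [#right - #left] places, and in the perceptive model somebody collides
   iff both directions occur.  So all agents learn the same bit [B a], with
   [B 0 = false]: [~~ (n %| a)] (lazy), [~~ (n %| a.*2)] (basic) or
   [0 < a < n] (perceptive).  The agents binary-search the largest ID, most
   significant bit first: in the phase of a bit the surviving candidates with
   that bit set move right, and a candidate without the bit drops out when some
   round of the phase saw a true bit.  One round per phase suffices when [B]
   holds on all of [0 < a < n]; in the basic model with [n] even it fails only
   at [a = n/2], and the extra rounds of a phase, where only candidates with a
   given ID bit move, split any candidate set of that size. *)

Section ClockwiseDistance.
Variable R : realType.
Implicit Types (x y z w : R) (i : int).
Local Open Scope ring_scope.

Lemma frac1_ge0 x : 0 <= frac1 x.
Proof. by rewrite /frac1 subr_ge0 floor_le. Qed.

Lemma frac1_lt1 x : frac1 x < 1.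
Proof. by rewrite /frac1 ltrBlDr addrC -[1]/(1%:~R) -intrD floorD1_gt. Qed.

Lemma subr_frac1 x : x - frac1 x = (Num.floor x)%:~R.
Proof. by rewrite /frac1; ring. Qed.

Lemma frac1_def x w i : 0 <= w < 1 -> x - w = i%:~R -> frac1 x = w.
Proof.
move=> /andP[w0 w1] xw; have xE : x = w + i%:~R by rewrite -xw; ring.
suff fx : Num.floor x = i by rewrite /frac1 fx -xw; ring.
by apply: floor_def; rewrite intrD xE; apply/andP; split; lra.
Qed.

Lemma eq_of_subr_intr x y i : 0 <= x < 1 -> 0 <= y < 1 -> x - y = i%:~R -> x = y.
Proof.
move=> /andP[x0 x1] /andP[y0 y1] xy.
suff i0 : i = 0 by apply/eqP; rewrite -subr_eq0 xy i0.
have lo : ((-1)%:~R : R) < i%:~R by rewrite intrN -xy; lra.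
have hi : (i%:~R : R) < 1%:~R by rewrite -xy; lra.
by move: lo hi; rewrite !ltr_int; lia.
Qed.

Lemma cwd_ge0 x y : 0 <= cwd x y. Proof. exact: frac1_ge0. Qed.

Lemma cwd_lt1 x y : cwd x y < 1. Proof. exact: frac1_lt1. Qed.

Lemma cwd_xx x : cwd x x = 0.
Proof. by rewrite /cwd subrr; apply: (frac1_def (i := 0)); rewrite ?lexx ?ltr01 ?subr0. Qed.

Lemma cwd_trans x y z : cwd x z = if cwd x y + cwd y z < 1
  then cwd x y + cwd y z else cwd x y + cwd y z - 1.
Proof.
have := subr_frac1 (y - x); have := subr_frac1 (z - y); rewrite /cwd.
have := frac1_ge0 (y - x); have := frac1_ge0 (z - y).
have := frac1_lt1 (y - x); have := frac1_lt1 (z - y).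
set a := frac1 (y - x); set b := frac1 (z - y) => b1 a1 b0 a0 bE aE.
case: ltP => ab1.
- apply: (frac1_def (i := Num.floor (y - x) + Num.floor (z - y))).
    by apply/andP; split; lra.
  by rewrite intrD -aE -bE; ring.
- apply: (frac1_def (i := Num.floor (y - x) + Num.floor (z - y) + 1)).
    by apply/andP; split; lra.
  by rewrite !intrD -aE -bE; ring.
Qed.

Lemma cwd_sym x y : cwd x y != 0 -> cwd y x = 1 - cwd x y.
Proof.
rewrite /cwd => nz; have := subr_frac1 (y - x).
have := frac1_ge0 (y - x); have := frac1_lt1 (y - x).
set a := frac1 (y - x) => a1 a0 aE.
have {}a0 : 0 < a by rewrite lt_neqAle eq_sym nz a0.
apply: (frac1_def (i := - Num.floor (y - x) - 1)).
  by apply/andP; split; lra.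
by rewrite intrD intrN -aE; ring.
Qed.

End ClockwiseDistance.

Section Configuration.
Variables (R : realType) (n : nat) (p : 'I_n -> R).
Hypothesis p_range : forall k, (0 <= p k < 1)%R.
Hypothesis p_inj : injective p.
Local Open Scope ring_scope.

Local Notation cwp k m := (cwd (p k) (p m)).

Lemma cwd_injr k m m' : cwp k m = cwp k m' -> m = m'.
Proof.
rewrite /cwd => e; apply: p_inj.
apply: (eq_of_subr_intr (i := Num.floor (p m - p k) - Num.floor (p m' - p k))) => //.
by rewrite intrD intrN -!subr_frac1 e; ring.
Qed.

Lemma cwd_eq0 k m : cwp k m = 0 -> m = k.
Proof. by rewrite -(cwd_xx (p k)) => /cwd_injr. Qed.

Lemma cwd_neq0 k k' : k != k' -> cwp k k' != 0.
Proof. by apply: contraNneq => /cwd_eq0 ->. Qed.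

Lemma cw_rank_self k : cw_rank p k k = 0%N.
Proof.
apply/eqP; rewrite /cw_rank cards_eq0; apply/eqP/setP => m.
by rewrite !inE cwd_xx ltNge cwd_ge0.
Qed.

Lemma cw_rank_lt k m : (cw_rank p k m < n)%N.
Proof.
rewrite /cw_rank -[n in (_ < n)%N]card_ord -cardsT; apply: proper_card.
by rewrite properT; apply/eqP => full; have := in_setT m; rewrite -full inE ltxx.
Qed.

Lemma cw_rank_mono k m m' : cwp k m < cwp k m' -> (cw_rank p k m < cw_rank p k m')%N.
Proof.
move=> lt_mm'; apply: proper_card; apply/properP; split.
  by apply/subsetP => x; rewrite !inE => /lt_trans; apply.
by exists m; rewrite !inE ?lt_mm' ?ltxx.
Qed.

Lemma cw_rank_inj k : injective (cw_rank p k).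
Proof.
move=> m m' e; case: (ltgtP (cwp k m) (cwp k m')) => [lt|lt|/cwd_injr //];
  by have := cw_rank_mono lt; rewrite e ltnn.
Qed.

Lemma cw_rank_surj k r : (r < n)%N -> exists m, cw_rank p k m = r.
Proof.
move=> lt_rn; pose g m := Ordinal (cw_rank_lt k m).
have g_inj : injective g by move=> a b /(congr1 val) /cw_rank_inj.
have [ginv _ gK] := injF_bij g_inj.
by exists (ginv (Ordinal lt_rn)); have := congr1 val (gK (Ordinal lt_rn)).
Qed.

(* Going clockwise from [k'], [m] comes before [k]: everything [k'] meets
   before [m] is also met from [k] before [m], and so is [k] itself. *)
Lemma cw_rank_ltl k k' m : k != k' -> cwp k' m < 1 - cwp k k' ->
  (cw_rank p k' m < cw_rank p k m)%N.
Proof.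
move=> kk' lt_m.
have k'k : cwp k' k = 1 - cwp k k' by rewrite cwd_sym ?cwd_neq0.
have via_k' m' : cwp k' m' < 1 - cwp k k' -> cwp k m' = cwp k k' + cwp k' m'.
  by move=> lt_m'; rewrite (cwd_trans _ (p k')) ifT //; lra.
apply: proper_card; apply/properP; split.
  apply/subsetP => x; rewrite !inE => lt_x.
  by rewrite (via_k' x) ?(via_k' m) //; [lra | apply: lt_trans lt_m].
have mk : m != k by apply: contraTneq lt_m => ->; rewrite k'k ltxx.
exists k; rewrite !inE ?cwd_xx.
  by rewrite lt_def cwd_ge0 andbT cwd_neq0 // eq_sym.
by rewrite k'k -leNgt ltW.
Qed.

Lemma cw_rank_injl m k k' : cw_rank p k m = cw_rank p k' m -> k = k'.
Proof.
move=> e; apply/eqP/negPn/negP => kk'.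
have [lt_m|ge_m] := ltP (cwp k' m) (1 - cwp k k').
  by have := cw_rank_ltl kk' lt_m; rewrite e ltnn.
have k'k : cwp k' k = 1 - cwp k k' by rewrite cwd_sym ?cwd_neq0.
have lt_m : cwp k m < 1 - cwp k' k.
  have := cwd_lt1 (p k') (p m) => lt1.
  by rewrite k'k (cwd_trans _ (p k')) ifF; [lra | apply/negbTE; rewrite -leNgt; lra].
have k'k_neq : k' != k by rewrite eq_sym.
by have := cw_rank_ltl k'k_neq lt_m; rewrite e ltnn.
Qed.

Hypothesis n_gt0 : (0 < n)%N.

Lemma absz_modz_lt (z : int) : (`|modz z n| < n)%N.
Proof.
have : 0 <= modz z n < n%:Z by rewrite modz_ge0 ?ltz_pmod // -lt0n.
by lia.
Qed.

Lemma new_posP d k :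
  exists m, new_pos p d k = p m /\ cw_rank p k m = `|modz (shift d) n|%N.
Proof.
rewrite /new_pos; case: pickP => [m /eqP rank_m | none]; first by exists m.
have [m rank_m] := cw_rank_surj k (absz_modz_lt (shift d)).
by have := none m; rewrite rank_m eqxx.
Qed.

Lemma new_pos_inj d : injective (new_pos p d).
Proof.
move=> k k'; have [m [-> rank_m]] := new_posP d k.
have [m' [-> rank_m']] := new_posP d k'.
by move/p_inj => mm'; apply: (@cw_rank_injl m); rewrite rank_m mm' rank_m'.
Qed.

Lemma new_pos_range d k : 0 <= new_pos p d k < 1.
Proof. by have [m [-> _]] := new_posP d k. Qed.

Lemma displacement_eq0 d k :
  (displacement p d k == 0) = (`|modz (shift d) n|%N == 0%N).
Proof.
rewrite /displacement; have [m [-> <-]] := new_posP d k.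
rewrite -(cw_rank_self k); apply/eqP/eqP => [/cwd_eq0 -> // | /cw_rank_inj ->].
exact: cwd_xx.
Qed.

End Configuration.

Lemma exists_argmin (T : finType) (P : pred T) (f : T -> nat) :
  [exists m, P m && [forall m', P m' ==> (f m <= f m')%N]] = [exists m, P m].
Proof.
apply/existsP/existsP => [[m /andP[Pm _]] | [m0 Pm0]]; first by exists m.
case: (arg_minnP f Pm0) => m Pm minm; exists m; rewrite Pm /=.
by apply/forallP => m'; apply/implyP => /minm.
Qed.

Lemma pick_map_neqNone (T : finType) (A : eqType) (Q : pred T) (g : T -> A) :
  ((if [pick x | Q x] is Some x then Some (g x) else None) != None)
  = [exists x, Q x].
Proof.
case: pickP => [x Qx | noQ]; apply/esym; first by apply/existsP; exists x.
by apply/existsP => -[x]; rewrite noQ.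
Qed.

Section ObservedBit.
Variables (R : realType) (n : nat) (p : 'I_n -> R).
Variable act : 'I_n -> bool.

Local Notation a := #|[set k | act k]|.
Local Notation orient passive := (fun k => if act k then Right else passive).

Lemma card_act_compl : (a + #|[set k | ~~ act k]|)%N = n.
Proof.
have compl := cardsC [set k | act k]; rewrite card_ord in compl.
by rewrite -[RHS]compl; congr (_ + _)%N; apply: eq_card => k; rewrite !inE.
Qed.

Lemma card_act_le : (a <= n)%N.
Proof. by have := card_act_compl; lia. Qed.

Lemma shift_right_left : shift (orient Left) = (a%:Z - (n - a)%:Z)%R.
Proof.
have -> : (n - a = #|[set k | ~~ act k]|)%N by have := card_act_compl; lia.
rewrite /shift.
by congr (Posz _ - Posz _)%R; apply: eq_card => k; rewrite !inE; case: (act k).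
Qed.

Lemma shift_right_idle : shift (orient Idle) = (a%:Z)%R.
Proof.
rewrite /shift; have -> : [set k | Defs.is_left (if act k then Right else Idle)] = set0.
  by apply/setP => k; rewrite !inE; case: (act k).
rewrite cards0 subr0.
by congr Posz; apply: eq_card => k; rewrite !inE; case: (act k).
Qed.

Lemma exists_act : [exists m, act m] = (0 < a)%N.
Proof.
by rewrite card_gt0; apply/existsP/set0Pn => -[m act_m]; exists m; rewrite ?inE in act_m *.
Qed.

Lemma exists_not_act : [exists m, ~~ act m] = (a < n)%N.
Proof.
have -> : (a < n)%N = (0 < #|[set k | ~~ act k]|)%N by have := card_act_compl; lia.
by rewrite card_gt0; apply/existsP/set0Pn => -[m act_m]; exists m; rewrite ?inE in act_m *.
Qed.

Lemma first_collision_right_left k :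
  (first_collision p (orient Left) k != None) = (0 < a < n)%N.
Proof.
rewrite /first_collision -exists_act -exists_not_act.
case act_k : (act k); rewrite pick_map_neqNone exists_argmin.
- have -> : [exists m, act m] by apply/existsP; exists k.
  by apply: eq_existsb => m; case: (act m).
- have -> : [exists m, ~~ act m] by apply/existsP; exists k; rewrite act_k.
  by rewrite andbT; apply: eq_existsb => m; case: (act m).
Qed.

Hypothesis p_range : forall k, (0 <= p k < 1)%R.
Hypothesis p_inj : injective p.
Hypothesis n_gt0 : (0 < n)%N.

Lemma displacement_right_left k :
  (displacement p (orient Left) k != 0)%R = ~~ (n %| a.*2)%N.
Proof.
rewrite (displacement_eq0 p_range p_inj n_gt0) shift_right_left -subzn ?card_act_le //.
have -> : (a%:Z - (n%:Z - a%:Z) = (-1) * n%:Z + (a.*2)%:Z)%R.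
  by rewrite -addnn PoszD; ring.
by rewrite modzMDl modz_nat.
Qed.

Lemma displacement_right_idle k :
  (displacement p (orient Idle) k != 0)%R = ~~ (n %| a)%N.
Proof.
by rewrite (displacement_eq0 p_range p_inj n_gt0) shift_right_idle modz_nat.
Qed.

End ObservedBit.

Definition id_bit (x i : nat) : bool := odd (x.-1 %/ 2 ^ i).

Definition in_probe (x j : nat) : bool := (j == 0%N) || id_bit x j.-1.

Definition probes_detect (n : nat) (ids : 'I_n -> nat) (B : nat -> bool) (L : nat) : Prop :=
  forall S : {set 'I_n}, S != set0 -> S != setT ->
  has (fun j => B #|S :&: [set k | in_probe (ids k) j]|) (iota 0 L).

Section BinarySearch.
Variables e L : nat.

(* Round [g] is round [g %% L] of phase [g %/ L]; phase [t] settles bit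
   [e - t.+1] of [id - 1], most significant bit first. *)
Definition phase_bit (f : nat -> bool) (t : nat) : bool :=
  has (fun j => f (t * L + j)) (iota 0 L).

Definition survives (f : nat -> bool) (x t : nat) : bool :=
  all (fun s => phase_bit f s ==> id_bit x (e - s.+1)) (iota 0 t).

Definition active (f : nat -> bool) (x g : nat) : bool :=
  [&& survives f x (g %/ L), id_bit x (e - (g %/ L).+1) & in_probe x (g %% L)].

Lemma survivesS f x t :
  survives f x t.+1 = survives f x t && (phase_bit f t ==> id_bit x (e - t.+1)).
Proof. by rewrite /survives -addn1 iotaD all_cat /= add0n addn1 andbT. Qed.

Lemma eq_survives f f' x t : {in gtn (t * L), f =1 f'} ->
  survives f x t = survives f' x t.
Proof.
move=> ff'; apply: eq_in_all => s; rewrite mem_iota /= => lt_st.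
congr (_ ==> _); apply: eq_in_has => j; rewrite mem_iota /= => lt_jL.
apply: ff'; rewrite inE; have : s.+1 * L <= t * L by rewrite leq_mul2r lt_st orbT.
by rewrite mulSn; lia.
Qed.

Definition prefix (t x : nat) : nat := x.-1 %/ 2 ^ (e - t).

Lemma prefixS t x : t < e -> prefix t.+1 x = (prefix t x).*2 + id_bit x (e - t.+1).
Proof.
move=> lt_te; rewrite /prefix /id_bit (_ : e - t = (e - t.+1).+1); last by lia.
by rewrite expnSr divnMA divn2 addnC odd_double_half.
Qed.

Lemma eqn_doubleDb (a c : nat) (b d : bool) :
  (a.*2 + b == c.*2 + d) = (a == c) && (b == d).
Proof. by case: b d => -[] /=; lia. Qed.

Section Election.
Variables (n : nat) (ids : 'I_n -> nat) (B : nat -> bool) (beta : nat -> bool).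
Hypothesis ids_inj : injective ids.
Hypothesis ids_gt0 : forall k, 0 < ids k.
Hypothesis ids_lt : forall k, (ids k).-1 < 2 ^ e.
Hypothesis L_gt0 : 0 < L.
Hypothesis B0 : B 0 = false.
Hypothesis detect : probes_detect ids B L.
Hypothesis beta_consistent : forall g, beta g = B #|[set k | active beta (ids k) g]|.
Variable k0 : 'I_n.

Let challengers t := [set k | survives beta (ids k) t && id_bit (ids k) (e - t.+1)].

Lemma phase_bit_challengers t : phase_bit beta t =
  has (fun j => B #|challengers t :&: [set k | in_probe (ids k) j]|) (iota 0 L).
Proof.
apply: eq_in_has => j; rewrite mem_iota /= => lt_jL.
rewrite beta_consistent; congr B; apply: eq_card => k; rewrite !inE /active.
by rewrite divnMDl // modnMDl divn_small // addn0 modn_small // andbA.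
Qed.

Let top := [arg max_(k > k0) ids k].

Lemma ids_le_top k : ids k <= ids top.
Proof. by rewrite /top; case: arg_maxnP => // m _; apply. Qed.

Let agrees t k := prefix t (ids k) == prefix t (ids top).

Lemma agreesS t k : t < e ->
  agrees t.+1 k = agrees t k && (id_bit (ids k) (e - t.+1) == id_bit (ids top) (e - t.+1)).
Proof. by move=> lt_te; rewrite /agrees !prefixS // eqn_doubleDb. Qed.

Lemma agrees_top_bit t k : t < e -> agrees t k ->
  id_bit (ids k) (e - t.+1) -> id_bit (ids top) (e - t.+1).
Proof.
move=> lt_te /eqP ag bit_k.
have le_pred : (ids k).-1 <= (ids top).-1 by rewrite -!subn1 leq_sub2r ?ids_le_top.
have := leq_div2r (2 ^ (e - t.+1)) le_pred; rewrite -/(prefix t.+1 _) -/(prefix t.+1 _).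
by rewrite !prefixS // ag bit_k; case: (id_bit _ _); rewrite // addn0 addn1 ltnn.
Qed.

Lemma survives_agrees t : t <= e -> forall k, survives beta (ids k) t = agrees t k.
Proof.
elim: t => [_ k | t IH lt_te k].
  by rewrite /agrees /prefix subn0 !divn_small ?ids_lt.
have le_te : t <= e by exact: ltnW.
have challengersE : challengers t = [set k | agrees t k && id_bit (ids k) (e - t.+1)].
  by apply/setP => k'; rewrite !inE IH.
rewrite survivesS agreesS // IH //.
case bit_top : (id_bit (ids top) (e - t.+1)).
- have top_in : top \in challengers t by rewrite challengersE inE bit_top andbT /agrees.
  have [all_in|not_all] := eqVneq (challengers t) setT.
    have : k \in challengers t by rewrite all_in inE.
    by rewrite challengersE inE => /andP[-> ->]; rewrite implybT.
  have -> : phase_bit beta t.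
    by rewrite phase_bit_challengers; apply: detect => //; apply/set0Pn; exists top.
  by rewrite implyTb eqb_id.
- have -> : phase_bit beta t = false.
    rewrite phase_bit_challengers; apply/hasPn => j _.
    suff -> : challengers t = set0 by rewrite set0I cards0 B0.
    apply/setP => k'; rewrite challengersE !inE; apply/negbTE/andP => -[ag bit_k'].
    by have := agrees_top_bit lt_te ag bit_k'; rewrite bit_top.
  rewrite implyFb andbT eqbF_neg; case ag : (agrees t k) => //=.
  by apply/esym/negP => /(agrees_top_bit lt_te ag); rewrite bit_top.
Qed.

Lemma survivors_single : exists top, forall k, survives beta (ids k) e = (k == top).
Proof.
exists top => k; rewrite survives_agrees // /agrees /prefix subnn expn0 !divn1.
apply/eqP/eqP => [ag | -> //]; apply: ids_inj.
by have := ids_gt0 k; have := ids_gt0 top; lia.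
Qed.

End Election.
End BinarySearch.

Section SearchAlgorithm.
Variables (R : realType) (mo : model) (passive : dir) (obs_bit : R * option R -> bool).
Variables e L : nat.

Definition moves_right (x : nat) (bs : seq bool) : bool :=
  active e L (nth false bs) x (size bs).

Definition search_alg : algorithm R :=
  Algo (e * L) (fun x h => if moves_right x (map obs_bit h) then Right else passive)
       (fun x h => survives e L (nth false (map obs_bit h)) x e).

Lemma search_alg_valid : allowed mo Right -> allowed mo passive -> valid mo search_alg.
Proof. by move=> okR okP x h /=; case: ifP. Qed.

Section Run.
Variables (n : nat) (ids : 'I_n -> nat) (B : nat -> bool).
Hypothesis obs_bitE : forall p : 'I_n -> R, (forall k, 0 <= p k < 1)%R -> injective p ->
  forall (act : 'I_n -> bool) k,
  obs_bit (observation p (fun k => if act k then Right else passive) mo k) =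
  B #|[set k | act k]|.
Hypothesis n_gt0 : 0 < n.

(* Every agent sees the same bit in every round, so all histories coincide. *)
Fixpoint common_bits (g : nat) : seq bool :=
  if g is g'.+1 then
    rcons (common_bits g') (B #|[set k | moves_right (ids k) (common_bits g')]|)
  else [::].

Lemma run_common_bits p0 : (forall k, 0 <= p0 k < 1)%R -> injective p0 -> forall t,
  [/\ forall k, (0 <= (run mo search_alg ids p0 t).1 k < 1)%R,
      injective (run mo search_alg ids p0 t).1 &
      forall k, map obs_bit ((run mo search_alg ids p0 t).2 k) = common_bits t].
Proof.
move=> p0_range p0_inj; elim=> [|t IH] //=.
case: (run mo search_alg ids p0 t) IH => p h [p_range p_inj hE] /=.
split=> [k | | k]; [exact: new_pos_range | exact: new_pos_inj |].
rewrite map_rcons hE; congr rcons.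
have -> : #|[set k | moves_right (ids k) (common_bits t)]| =
          #|[set k | moves_right (ids k) (map obs_bit (h k))]|.
  by apply: eq_card => k'; rewrite !inE hE.
exact: obs_bitE.
Qed.

Definition bit_seq (g : nat) : bool := nth false (common_bits g.+1) g.

Lemma size_common_bits g : size (common_bits g) = g.
Proof. by elim: g => //= g IH; rewrite size_rcons IH. Qed.

Lemma nth_common_bits g i : i < g -> nth false (common_bits g) i = bit_seq i.
Proof.
elim: g => // g IH; rewrite ltnS leq_eqVlt => /orP[/eqP -> // | lt_ig].
by rewrite /= nth_rcons size_common_bits lt_ig IH.
Qed.

Lemma bit_seq_consistent g :
  bit_seq g = B #|[set k | active e L bit_seq (ids k) g]|.
Proof.
rewrite {1}/bit_seq /= nth_rcons size_common_bits ltnn eqxx; congr B.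
apply: eq_card => k; rewrite !inE /moves_right size_common_bits /active.
rewrite (@eq_survives _ _ _ bit_seq) // => i; rewrite inE => lt_i.
by apply: nth_common_bits; apply: leq_trans lt_i (leq_trunc_div _ _).
Qed.

End Run.

Lemma search_alg_solves N par (B : nat -> nat -> bool) :
  N <= 2 ^ e -> 0 < L ->
  (forall n, 4 < n -> odd n = par ->
    forall p : 'I_n -> R, (forall k, 0 <= p k < 1)%R -> injective p ->
    forall (act : 'I_n -> bool) k,
    obs_bit (observation p (fun k => if act k then Right else passive) mo k) =
    B n #|[set k | act k]|) ->
  (forall n, 4 < n -> odd n = par -> B n 0 = false) ->
  (forall n (ids : 'I_n -> nat), 4 < n -> odd n = par -> injective ids ->
    (forall k, 0 < ids k <= N) -> probes_detect ids (B n) L) ->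
  solves mo N par search_alg.
Proof.
move=> le_N2e L_gt0 obsE B0 detect n n4 _ par_n ids ids_inj ids_range p p_range p_inj.
have n_gt0 : 0 < n by apply: leq_trans n4.
have ids_gt0 k : 0 < ids k by case/andP: (ids_range k).
have ids_lt k : (ids k).-1 < 2 ^ e by case/andP: (ids_range k); lia.
have [_ _ histE] := run_common_bits ids (obsE n n4 par_n) n_gt0 p_range p_inj (e * L).
have [top topE] := survivors_single ids_inj ids_gt0 ids_lt L_gt0 (B0 n n4 par_n)
  (detect n ids n4 par_n ids_inj ids_range) (bit_seq_consistent ids (B n)) (Ordinal n_gt0).
exists top => k /=; rewrite histE -(topE k); apply: eq_survives => i; rewrite inE.
exact: nth_common_bits.
Qed.

End SearchAlgorithm.

Lemma card_proper_set n (S : {set 'I_n}) : S != set0 -> S != setT -> 0 < #|S| < n.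
Proof.
move=> S0 ST; rewrite card_gt0 S0 /= -[n in _ < n]card_ord -cardsT.
by apply: proper_card; rewrite properT.
Qed.

Lemma ndvdn_small n a : 0 < a < n -> ~~ (n %| a).
Proof. by case/andP=> a_gt0 lt_an; apply/negP => /(dvdn_leq a_gt0); lia. Qed.

Lemma dvdn_double_small n a : 0 < a < n -> (n %| a.*2) = (a.*2 == n).
Proof.
case/andP=> a_gt0 lt_an; apply/idP/eqP => [/dvdnP[q aq] | <-]; last exact: dvdnn.
by rewrite -addnn in aq *; case: q aq => [|[|q]]; rewrite ?mul0n ?mul1n ?mulSn; lia.
Qed.

Lemma probes_detect_proper n (ids : 'I_n -> nat) (B : nat -> bool) L :
  0 < L -> (forall a, 0 < a < n -> B a) -> probes_detect ids B L.
Proof.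
move=> L_gt0 B_proper S S0 ST; apply/hasP; exists 0; first by rewrite mem_iota.
rewrite (_ : _ :&: _ = S); first exact/B_proper/card_proper_set.
by apply/setP => k; rewrite !inE andbT.
Qed.

Lemma eq_from_bits e x y : x < 2 ^ e -> y < 2 ^ e ->
  (forall i, i < e -> odd (x %/ 2 ^ i) = odd (y %/ 2 ^ i)) -> x = y.
Proof.
elim: e x y => [|e IH] x y lt_x lt_y same_bits.
  by move: lt_x lt_y; rewrite expn0 !ltnS !leqn0 => /eqP -> /eqP ->.
have odd_xy := same_bits 0 (ltn0Sn _); rewrite expn0 !divn1 in odd_xy.
have half_xy : x./2 = y./2.
  rewrite -!divn2; apply: IH; rewrite ?ltn_divLR // -?expnSr //.
  by move=> i lt_ie; rewrite -!divnMA -expnS; apply: same_bits.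
by rewrite -(odd_double_half x) -(odd_double_half y) half_xy odd_xy.
Qed.

Lemma exists_id_bit_neq e x y : 0 < x -> 0 < y -> x.-1 < 2 ^ e -> y.-1 < 2 ^ e ->
  x != y -> exists2 i, i < e & id_bit x i != id_bit y i.
Proof.
move=> x_gt0 y_gt0 lt_x lt_y xy.
suff /existsP[i neq] : [exists i : 'I_e, id_bit x i != id_bit y i] by exists i.
rewrite -negb_forall; apply: contra xy => /forallP same_bits; apply/eqP.
suff : x.-1 = y.-1 by lia.
apply: eq_from_bits lt_x lt_y _ => i lt_ie.
exact/eqP/(same_bits (Ordinal lt_ie)).
Qed.

(* For [0 < a < n] the bit [~~ (n %| a.*2)] fails only at [a.*2 = n]; a set of
   exactly half the agents is split by the probe of a bit where two members differ. *)
Lemma probes_detect_double n e (ids : 'I_n -> nat) : 2 < n -> injective ids ->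
  (forall k, 0 < ids k) -> (forall k, (ids k).-1 < 2 ^ e) ->
  probes_detect ids (fun a => ~~ (n %| a.*2)) e.+1.
Proof.
move=> n_gt2 ids_inj ids_gt0 ids_lt S S0 ST.
have /andP[S_gt0 S_lt] := card_proper_set S0 ST.
have [half | not_half] := eqVneq #|S|.*2 n; last first.
  apply/hasP; exists 0; first by rewrite mem_iota.
  rewrite (_ : _ :&: _ = S) ?dvdn_double_small ?S_gt0 //.
  by apply/setP => k; rewrite !inE andbT.
have /card_gt1P[k1 [k2 [k1S k2S k12]]] : 1 < #|S| by lia.
have [i lt_ie bits_k12] : exists2 i, i < e & id_bit (ids k1) i != id_bit (ids k2) i.
  by apply: exists_id_bit_neq => //; apply: contra_neq k12 => /ids_inj.
have [u [v [uS vS bit_u bit_v]]] : exists u v,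
    [/\ u \in S, v \in S, id_bit (ids u) i & ~~ id_bit (ids v) i].
  move: bits_k12; case b1 : (id_bit (ids k1) i); case b2 : (id_bit (ids k2) i) => // _.
  - by exists k1, k2; rewrite b1 b2.
  - by exists k2, k1; rewrite b1 b2.
apply/hasP; exists i.+1; first by rewrite mem_iota ltnS lt_ie.
set T := S :&: _.
have T_gt0 : 0 < #|T| by rewrite card_gt0; apply/set0Pn; exists u; rewrite !inE uS /in_probe bit_u.
have T_lt : #|T| < #|S|.
  apply: proper_card; apply/properP; split; first exact: subsetIl.
  by exists v => //; rewrite /T !inE vS /in_probe /= (negbTE bit_v).
have lt_Tn : #|T|.*2 < n by apply: leq_trans (eq_leq half); rewrite ltn_double.
by apply: ndvdn_small; rewrite double_gt0 T_gt0.
Qed.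

Definition moved (R : realType) (o : R * option R) : bool := (o.1 != 0)%R.
Definition collided (R : realType) (o : R * option R) : bool := o.2 != None.

Section Instances.
Variables (R : realType) (N : nat).
Local Notation e := (up_log 2 N).

Let N_le_2e : N <= 2 ^ e := up_logP N (isT : 1 < 2).

Lemma basic_even_solves :
  solves Basic N false (search_alg Left (@moved R) e e.+1).
Proof.
apply: (search_alg_solves (B := fun n a => ~~ (n %| a.*2))) N_le_2e _ _ _ _ => //.
- move=> n n4 _ p p_range p_inj act k.
  by rewrite /moved displacement_right_left //; apply: leq_trans n4.
- by move=> n _ _; rewrite dvdn0.
- move=> n ids n4 _ ids_inj ids_range.
  have ids_gt0 k : 0 < ids k by case/andP: (ids_range k).
  have ids_lt k : (ids k).-1 < 2 ^ e by have := N_le_2e; case/andP: (ids_range k); lia.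
  by apply: probes_detect_double => //; lia.
Qed.

Lemma basic_odd_solves :
  solves Basic N true (search_alg Left (@moved R) e 1).
Proof.
apply: (search_alg_solves (B := fun n a => ~~ (n %| a.*2))) N_le_2e _ _ _ _ => //.
- move=> n n4 _ p p_range p_inj act k.
  by rewrite /moved displacement_right_left //; apply: leq_trans n4.
- by move=> n _ _; rewrite dvdn0.
- move=> n ids _ odd_n _ _; apply: probes_detect_proper => // a a_proper.
  by rewrite -muln2 Gauss_dvdl ?coprimen2 ?odd_n // ndvdn_small.
Qed.

Lemma lazy_solves par :
  solves Lazy N par (search_alg Idle (@moved R) e 1).
Proof.
apply: (search_alg_solves (B := fun n a => ~~ (n %| a))) N_le_2e _ _ _ _ => //.
- move=> n n4 _ p p_range p_inj act k.
  by rewrite /moved displacement_right_idle //; apply: leq_trans n4.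
- by move=> n _ _; rewrite dvdn0.
- by move=> n ids _ _ _ _; apply: probes_detect_proper => // a /ndvdn_small.
Qed.

Lemma perceptive_solves par :
  solves Perceptive N par (search_alg Left (@collided R) e 1).
Proof.
apply: (search_alg_solves (B := fun n a => 0 < a < n)) N_le_2e _ _ _ _ => //.
- by move=> n _ _ p p_range p_inj act k; rewrite /collided /= first_collision_right_left.
- by move=> n ids _ _ _ _; apply: probes_detect_proper.
Qed.

End Instances.

Theorem lemma10 (R : realType) :
  (exists c : nat, forall N : nat, exists alg : algorithm R,
      valid Basic alg /\ (rounds alg <= c * (up_log 2 N) ^ 2)%N /\
      solves Basic N false alg) /\
  (forall N : nat, exists alg : algorithm R,
      valid Basic alg /\ (rounds alg <= up_log 2 N)%N /\ solves Basic N true alg) /\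
  (forall (N : nat) (par : bool), exists alg : algorithm R,
      valid Lazy alg /\ (rounds alg <= up_log 2 N)%N /\ solves Lazy N par alg) /\
  (forall (N : nat) (par : bool), exists alg : algorithm R,
      valid Perceptive alg /\ (rounds alg <= up_log 2 N)%N /\
      solves Perceptive N par alg).
Proof.
split; [exists 2 => N | split; [move=> N | split => N par]].
- exists (search_alg Left (@moved R) (up_log 2 N) (up_log 2 N).+1).
  by split; [exact: search_alg_valid | split; [rewrite /=; nia | exact: basic_even_solves]].
- exists (search_alg Left (@moved R) (up_log 2 N) 1).
  by split; [exact: search_alg_valid | split; [rewrite /= muln1 | exact: basic_odd_solves]].
- exists (search_alg Idle (@moved R) (up_log 2 N) 1).
  by split; [exact: search_alg_valid | split; [rewrite /= muln1 | exact: lazy_solves]].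
- exists (search_alg Left (@collided R) (up_log 2 N) 1).
  by split; [exact: search_alg_valid | split; [rewrite /= muln1 | exact: perceptive_solves]].
Qed.
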